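(* Let $\mathcal M,\widehat{\mathcal M}\subset\mathbb R^D$ be closed embedded submanifolds with $\mathrm{reach}(\mathcal M)\ge\zeta_{\min}$, $\mathrm{reach}(\widehat{\mathcal M})\ge\zeta_{\min}$ and $d_H(\mathcal M,\widehat{\mathcal M})\le\varepsilon$, for some $\zeta_{\min}>0$ and $\varepsilon\in(0,\zeta_{\min}/4)$. Fix $r\in(0,\zeta_{\min}-2\varepsilon)$ and let $\pi,\hat\pi$ be the nearest-point projections onto $\mathcal M$ and $\widehat{\mathcal M}$ on $\mathcal T_{\zeta_{\min}}(\mathcal M)$ and $\mathcal T_{\zeta_{\min}}(\widehat{\mathcal M})$ respectively. Then for every $x\in\mathcal T_r(\mathcal M)$, both $\pi(x)$ and $\hat\pi(x)$ are well defined and \[\|\pi(x)-\hat\pi(x)\|\le\varepsilon+2\sqrt{\frac{\operatorname{dist}(x,\mathcal M)\varepsilon+\varepsilon^2}{1-(\operatorname{dist}(x,\mathcal M)+\varepsilon)/\zeta_{\min}}}.\] Consequently $\sup_{x\in\mathcal T_r(\mathcal M)}\|\pi(x)-\hat\pi(x)\|\le\varepsilon+2\sqrt{\frac{r\varepsilon+\varepsilon^2}{1-(r+\varepsilon)/\zeta_{\min}}}\lesssim_{\zeta_{\min},r}\sqrt\varepsilon$.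
   Context: Reach: largest $r$ such that every point at distance $<r$ has a unique nearest point. $\mathcal T_r(\mathcal M):=\{x:\operatorname{dist}(x,\mathcal M)<r\}$. $d_H$ is the Hausdorff distance. *)

From HB Require Import structures.
From mathcomp Require Import all_boot all_order all_algebra.
From mathcomp Require Import all_classical all_reals all_analysis.
Set Implicit Arguments. Unset Strict Implicit. Unset Printing Implicit Defensive.
Import Order.TTheory GRing.Theory Num.Theory.
Import numFieldNormedType.Exports.
Local Open Scope classical_set_scope.
Local Open Scope ring_scope.

Section Defs.
Variables (R : realType) (D : nat).
Local Notation V := 'rV[R]_D.

(* Euclidean norm on R^D (the library norm on matrices is the sup norm). *)
Definition norm2 (v : V) : R := Num.sqrt (\sum_(i < D) v ord0 i ^+ 2).

(* dist(x, A) = inf_{a in A} |x - a| (= +oo when A is empty). *)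
Definition dist (x : V) (A : set V) : \bar R :=
  ereal_inf [set (norm2 (x - a))%:E | a in A].

Definition hausdorff_dist (A B : set V) : \bar R :=
  maxe (ereal_sup [set dist a B | a in A]) (ereal_sup [set dist b A | b in B]).

Definition tube (A : set V) (r : R) : set V := [set x | (dist x A < r%:E)%E].

Definition nearest (A : set V) (x p : V) : Prop :=
  A p /\ forall q, A q -> norm2 (x - p) <= norm2 (x - q).

Definition unique_nearest (A : set V) (x : V) : Prop :=
  exists! p, nearest A x p.

Definition reach (A : set V) : \bar R :=
  ereal_sup [set r%:E | r in [set r : R | 0 <= r /\
     forall x, (dist x A < r%:E)%E -> unique_nearest A x]].

Fixpoint iterD (m : nat) (vs : seq V) (F : V -> 'rV[R]_m) : V -> 'rV[R]_m :=
  match vs with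
  | [::] => F
  | v :: vs' => fun y => 'D_v (iterD vs' F) y
  end.

Definition smooth_on (m : nat) (U : set V) (F : V -> 'rV[R]_m) : Prop :=
  forall vs y, U y -> differentiable (iterD vs F) y.

(* Smooth embedded submanifold of R^D (of some dimension d <= D):
   locally a regular level set of a smooth submersion. *)
Definition embedded_submanifold (M : set V) : Prop :=
  exists d : nat, (d <= D)%N /\
  forall p, M p -> exists U : set V, [/\ open U, U p &
    exists F : V -> 'rV[R]_(D - d),
      [/\ smooth_on U F,
          (forall y, U y -> forall w, exists u, 'd F y u = w) &
          (forall y, U y -> (M y <-> F y = 0))]].
End Defs.

(* The heart of the matter is Federer's inequality for a closed set A of reach at
   least zeta: if p is a nearest point of A to x and q lies in A, then
   2 zeta <x - p, q - p> <= (|x - p| + e) |q - p|^2 for every e > 0.  It holds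
   because p remains the nearest point all along the normal ray
   p + s (x - p) / |x - p|, s < zeta, which is proved by pushing the point outwards
   in small steps, each justified by a variational argument for the penalty
   z |-> |z - y|^2 - c dist(z, A)^2.

   For the theorem, let d = dist(x, M), p = pi(x), ph = pihat(x) and let q be a
   nearest point of M to ph.  Hausdorff closeness gives |x - ph| <= d + eps and
   |x - q| <= d + 2 eps.  Expanding |x - q|^2 = d^2 - 2 <x - p, q - p> + |q - p|^2 and
   using Federer's inequality yields
   |q - p|^2 (1 - (d + eps) / zeta) <= 4 (d eps + eps^2), and
   |p - ph| <= |p - q| + |q - ph| <= |p - q| + eps. *)

From HB Require Import structures.
From mathcomp Require Import all_boot all_order all_algebra.
From mathcomp Require Import all_classical all_reals all_analysis.
From mathcomp Require Import ring lra zify.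
Import Order.TTheory GRing.Theory Num.Theory.
Import numFieldNormedType.Exports.
Local Open Scope classical_set_scope.
Local Open Scope ring_scope.

Section Euclid.
Context {R : realType} {D : nat}.
Local Notation V := 'rV[R]_D.
Implicit Types (u v w : V) (k : R).

Definition dot (u v : V) : R := \sum_(i < D) u ord0 i * v ord0 i.

Lemma dotC u v : dot u v = dot v u.
Proof. by apply: eq_bigr => i _; rewrite mulrC. Qed.

Lemma dotDl u v w : dot (u + v) w = dot u w + dot v w.
Proof. by rewrite /dot -big_split; apply: eq_bigr => i _; rewrite mxE mulrDl. Qed.

Lemma dotDr u v w : dot w (u + v) = dot w u + dot w v.
Proof. by rewrite dotC dotDl !(dotC w). Qed.

Lemma dotZl k u v : dot (k *: u) v = k * dot u v.
Proof. by rewrite /dot mulr_sumr; apply: eq_bigr => i _; rewrite mxE mulrA. Qed.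

Lemma dotZr k u v : dot v (k *: u) = k * dot v u.
Proof. by rewrite dotC dotZl dotC. Qed.

Lemma dotNl u v : dot (- u) v = - dot u v.
Proof. by rewrite -scaleN1r dotZl mulN1r. Qed.

Lemma dotBl u v w : dot (u - v) w = dot u w - dot v w.
Proof. by rewrite dotDl dotNl. Qed.

Lemma dotBr u v w : dot w (u - v) = dot w u - dot w v.
Proof. by rewrite !(dotC w) dotBl. Qed.

Lemma dot0l v : dot 0 v = 0.
Proof. by rewrite /dot big1 // => i _; rewrite mxE mul0r. Qed.

Lemma dotvv_ge0 v : 0 <= dot v v.
Proof. by apply: sumr_ge0 => i _; rewrite -expr2 sqr_ge0. Qed.

Lemma dotvv_eq0 v : dot v v = 0 -> v = 0.
Proof.
move=> /eqP; rewrite psumr_eq0 => [/allP vi0|i _]; last by rewrite -expr2 sqr_ge0.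
apply/rowP => i; rewrite mxE.
by have := vi0 i (mem_index_enum i); rewrite /= mulf_eq0 orbb => /eqP.
Qed.

Lemma norm2E v : norm2 v = Num.sqrt (dot v v).
Proof. by []. Qed.

Lemma norm2_sqr v : norm2 v ^+ 2 = dot v v.
Proof. exact/sqr_sqrtr/dotvv_ge0. Qed.

Lemma norm2_ge0 v : 0 <= norm2 v.
Proof. exact: sqrtr_ge0. Qed.

Lemma norm2_eq0 v : norm2 v = 0 -> v = 0.
Proof. by move=> v0; apply: dotvv_eq0; rewrite -norm2_sqr v0 expr0n. Qed.

Lemma norm2_gt0 v : v != 0 -> 0 < norm2 v.
Proof. by move=> v0; rewrite lt_def norm2_ge0 andbT; apply: contra_neq v0 => /norm2_eq0. Qed.

Lemma norm2_0 : norm2 (0 : V) = 0.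
Proof. by rewrite norm2E dot0l sqrtr0. Qed.

Lemma ler_norm2_sqr (a : R) v : 0 <= a -> a ^+ 2 <= norm2 v ^+ 2 -> a <= norm2 v.
Proof. by move=> a0 le_sqr; rewrite -(@ler_pXn2r _ 2) ?nnegrE ?norm2_ge0. Qed.

Lemma norm2_le_sqr v (a : R) : 0 <= a -> norm2 v ^+ 2 <= a ^+ 2 -> norm2 v <= a.
Proof. by move=> a0 le_sqr; rewrite -(@ler_pXn2r _ 2) ?nnegrE ?norm2_ge0. Qed.

Lemma cauchy_schwarz u v : dot u v <= norm2 u * norm2 v.
Proof.
have [->|u0] := eqVneq u 0; first by rewrite dot0l norm2_0 mul0r.
have [->|v0] := eqVneq v 0; first by rewrite dotC dot0l norm2_0 mulr0.
have := dotvv_ge0 (norm2 v *: u - norm2 u *: v).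
rewrite !(dotBl, dotBr, dotZl, dotZr) -!norm2_sqr (dotC v u).
have := mulr_gt0 (norm2_gt0 _ u0) (norm2_gt0 _ v0); nra.
Qed.

Lemma norm2D_sqr u v : norm2 (u + v) ^+ 2 = norm2 u ^+ 2 + 2 * dot u v + norm2 v ^+ 2.
Proof. by rewrite !norm2_sqr !(dotDl, dotDr) (dotC v u); ring. Qed.

Lemma norm2B_sqr u v : norm2 (u - v) ^+ 2 = norm2 u ^+ 2 - 2 * dot u v + norm2 v ^+ 2.
Proof. by rewrite !norm2_sqr !(dotBl, dotBr) (dotC v u); ring. Qed.

Lemma ler_norm2D u v : norm2 (u + v) <= norm2 u + norm2 v.
Proof.
apply: norm2_le_sqr; first by rewrite addr_ge0 ?norm2_ge0.
by rewrite norm2D_sqr; have := cauchy_schwarz u v; nra.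
Qed.

Lemma norm2Z k v : norm2 (k *: v) = `|k| * norm2 v.
Proof. by rewrite !norm2E dotZl dotZr mulrA -expr2 sqrtrM ?sqr_ge0 // sqrtr_sqr. Qed.

Lemma norm2_shift_sqr w k v :
  norm2 (w + k *: v) ^+ 2 = norm2 w ^+ 2 + 2 * k * dot w v + k ^+ 2 * norm2 v ^+ 2.
Proof. by rewrite norm2D_sqr dotZr norm2Z exprMn real_normK ?num_real // mulrA. Qed.

Lemma norm2N v : norm2 (- v) = norm2 v.
Proof. by rewrite -scaleN1r norm2Z normrN normr1 mul1r. Qed.

Lemma norm2_distC u v : norm2 (u - v) = norm2 (v - u).
Proof. by rewrite -norm2N opprB. Qed.

Lemma ler_norm2_distD u v w : norm2 (u - w) <= norm2 (u - v) + norm2 (v - w).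
Proof. by have := ler_norm2D (u - v) (v - w); rewrite addrA subrK. Qed.

Lemma ler_norm2_dist_dist u v : `|norm2 u - norm2 v| <= norm2 (u - v).
Proof.
have := ler_norm2_distD u v 0; have := ler_norm2_distD v u 0.
rewrite !subr0 (norm2_distC v u) => vu uv.
by rewrite ler_norml; apply/andP; split; lra.
Qed.

Lemma mx_norm_le_norm2 v : `|v| <= norm2 v.
Proof.
rewrite [leLHS]mx_normrE; apply/bigmax_leP; split => [|[i j] _ /=]; first exact: norm2_ge0.
rewrite (ord1 i) ler_norm2_sqr // real_normK ?num_real // norm2_sqr.
by rewrite /dot (bigD1 j) //= -expr2 lerDl sumr_ge0 // => k _; rewrite -expr2 sqr_ge0.
Qed.

Lemma norm2_le_mx_norm v : norm2 v <= D.+1%:R * `|v|.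
Proof.
apply: norm2_le_sqr; first by rewrite mulr_ge0.
have coord_le i : v ord0 i * v ord0 i <= `|v| ^+ 2.
  rewrite -expr2 -real_normK ?num_real // lerXn2r ?nnegrE //.
  by rewrite [leRHS]mx_normrE (le_bigmax _ _ (ord0, i)).
rewrite norm2_sqr (le_trans (ler_sum _ (fun i _ => coord_le i))) //.
rewrite sumr_const card_ord exprMn -[_ *+ D]mulr_natl.
by apply: ler_wpM2r; [exact: sqr_ge0 | rewrite -natrX ler_nat; lia].
Qed.

Lemma penalty_descent y z b b' v (c tau : R) : c *: (z - b) - (z - y) = v -> v != 0 ->
  0 < c -> c <= 1/2 -> 0 < tau -> tau <= 1/2 -> norm2 (b' - b) < norm2 v / 4 ->
  norm2 (z + tau *: v - y) ^+ 2 - c * norm2 (z + tau *: v - b') ^+ 2 <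
  norm2 (z - y) ^+ 2 - c * norm2 (z - b') ^+ 2.
Proof.
move=> v_def v0 c0 c_le tau0 tau_le b'b; set N := norm2 v ^+ 2.
have N_gt0 : 0 < N by rewrite exprn_gt0 ?norm2_gt0.
have shift w : norm2 (z + tau *: v - w) ^+ 2 =
    norm2 (z - w) ^+ 2 + 2 * tau * dot (z - w) v + tau ^+ 2 * N.
  by rewrite addrAC norm2_shift_sqr.
have dot_split : dot (z - y) v = c * dot (z - b') v + c * dot (b' - b) v - N.
  have -> : z - y = c *: (z - b') + c *: (b' - b) - v.
    by rewrite -v_def; apply/rowP => i; rewrite !mxE; ring.
  by rewrite (dotBl _ v) (dotDl (c *: _)) !dotZl /N norm2_sqr.
have b'b_dot : dot (b' - b) v <= N / 4.
  apply: le_trans (cauchy_schwarz _ _) _.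
  by rewrite /N expr2 mulrAC; apply: ler_wpM2r; rewrite ?norm2_ge0 ?ltW.
rewrite !shift dot_split.
have ch : c * dot (b' - b) v <= N / 8.
  by apply: le_trans (ler_wpM2l (ltW c0) b'b_dot) _; nra.
have ctau : (1 - c) * tau <= 1 / 2 by have := mulr_gt0 c0 tau0; lra.
have := ler_wpM2l (ltW tau0) ch; have := ler_wpM2r (ltW (mulr_gt0 tau0 N_gt0)) ctau.
have := mulr_gt0 tau0 N_gt0; lra.
Qed.

Lemma lipschitz_continuous (f : V -> R) k : 0 <= k ->
  (forall u v, `|f u - f v| <= k * norm2 (u - v)) -> continuous f.
Proof.
move=> k0 f_lip x; apply/(cvgrPdist_lt (FF := nbhs_filter x)) => e e0.
set K := (k + 1) * D.+1%:R; have K0 : 0 < K by rewrite mulr_gt0 ?ltr0n //; lra.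
have /cvgrPdist_lt /(_ (e / K) (divr_gt0 e0 K0)) : (fun t : V => t) @ x --> x := cvg_id.
apply: filterS => t /= xt.
apply: (le_lt_trans (f_lip x t)); apply: (le_lt_trans (ler_wpM2l k0 (norm2_le_mx_norm _))).
apply: (@le_lt_trans _ _ (K * `|x - t|)); first by rewrite -mulrA ler_wpM2r ?mulr_ge0 //; lra.
by rewrite -ltr_pdivlMl // mulrC.
Qed.

End Euclid.

Section Distance.
Context {R : realType} {D : nat}.
Local Notation V := 'rV[R]_D.
Implicit Types (a b u v w z : V).

Lemma norm2_dist_continuous v : continuous (fun z => norm2 (z - v)).
Proof.
apply: (lipschitz_continuous _ 1) => // u w; rewrite mul1r.
by have := ler_norm2_dist_dist (u - v) (w - v); rewrite opprB addrA subrK.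
Qed.

Lemma closed_norm2_le v (r : R) : closed [set z | norm2 (z - v) <= r].
Proof.
exact: (@preimage_closed _ _ (fun z => norm2 (z - v)) [set x : R | x <= r]
  (fun z _ => norm2_dist_continuous v z) (@closed_le R r)).
Qed.

Lemma closed_norm2_ge v (r : R) : closed [set z | r <= norm2 (z - v)].
Proof.
exact: (@preimage_closed _ _ (fun z => norm2 (z - v)) [set x : R | r <= x]
  (fun z _ => norm2_dist_continuous v z) (@closed_ge R r)).
Qed.

Lemma compact_norm2_bounded (K : set V) v (r : R) :
  closed K -> K `<=` [set z | norm2 (z - v) <= r] -> compact K.
Proof.
move=> Kcl Kr; apply: bounded_closed_compact => //.
exists (norm2 v + r); split; first exact: num_real.
move=> m m_gt z /Kr /= zr; apply: (le_trans (mx_norm_le_norm2 z)); apply/ltW/(le_lt_trans _ m_gt).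
by have := ler_norm2_distD z v 0; rewrite !subr0; lra.
Qed.

(* [fine] sends the distance [+oo] to the empty set to [0]. *)
Definition rdist (A : set V) z : R := fine (dist z A).

Variable A : set V.

Lemma dist_ge0 z : (0 <= dist z A)%E.
Proof. by apply: le_ereal_inf_tmp => _ [a _ <-]; rewrite lee_fin norm2_ge0. Qed.

Lemma dist_le_norm2 z a : A a -> (dist z A <= (norm2 (z - a))%:E)%E.
Proof. by move=> Aa; apply: ereal_inf_lbound; exists a. Qed.

Lemma dist_rdist z a : A a -> dist z A = (rdist A z)%:E.
Proof.
move=> Aa; rewrite /rdist fineK // ge0_fin_numE ?dist_ge0 //.
by apply: (le_lt_trans (dist_le_norm2 z _ Aa)); rewrite ltry.
Qed.

Lemma rdist_ge0 z : 0 <= rdist A z.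
Proof. exact/fine_ge0/dist_ge0. Qed.

Lemma rdist_le_norm2 z a : A a -> rdist A z <= norm2 (z - a).
Proof. by move=> Aa; rewrite -lee_fin -(dist_rdist z _ Aa) dist_le_norm2. Qed.

Lemma rdist_ge z a0 (m : R) : A a0 -> (forall a, A a -> m <= norm2 (z - a)) -> m <= rdist A z.
Proof.
move=> Aa0 m_le; rewrite -lee_fin -(dist_rdist z _ Aa0).
by apply: le_ereal_inf_tmp => _ [a Aa <-]; rewrite lee_fin m_le.
Qed.

Lemma rdist_lipschitz z w a0 : A a0 -> rdist A z <= rdist A w + norm2 (z - w).
Proof.
move=> Aa0; rewrite -lerBlDr; apply: (rdist_ge w _ _ Aa0) => a Aa.
rewrite lerBlDr addrC; exact: le_trans (rdist_le_norm2 z _ Aa) (ler_norm2_distD z w a).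
Qed.

Lemma rdist_continuous a0 : A a0 -> continuous (rdist A).
Proof.
move=> Aa0; apply: (lipschitz_continuous _ 1) => // u v; rewrite mul1r ler_norml.
have := rdist_lipschitz u v _ Aa0; have := rdist_lipschitz v u _ Aa0; rewrite (norm2_distC v u).
by move=> vu uv; apply/andP; split; lra.
Qed.

Lemma rdist_nearest z b : nearest A z b -> rdist A z = norm2 (z - b).
Proof.
by move=> [Ab b_min]; apply: le_anti; rewrite rdist_le_norm2 //= (rdist_ge z _ _ Ab b_min).
Qed.

Lemma dist_nearest z b : nearest A z b -> dist z A = (norm2 (z - b))%:E.
Proof. by move=> zb; rewrite (dist_rdist z _ zb.1) (rdist_nearest z b zb). Qed.

Lemma reach_unique_nearest (zeta : R) z :
  (zeta%:E <= reach A)%E -> (dist z A < zeta%:E)%E -> unique_nearest A z.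
Proof.
move=> zeta_le z_lt; apply: contrapT => z_not_unique.
suff : (reach A <= dist z A)%E by move/(le_trans zeta_le); rewrite leNgt z_lt.
apply: ge_ereal_sup => _ [r [_ r_unique] <-].
by rewrite leNgt; apply/negP => /r_unique.
Qed.

Lemma nearest_unique {z b b'} : unique_nearest A z -> nearest A z b -> nearest A z b' -> b' = b.
Proof. by move=> [p [_ p_uniq]] /p_uniq <- /p_uniq. Qed.

Lemma nearest_segment z b (l : R) : nearest A z b -> 0 <= l <= 1 ->
  nearest A (b + l *: (z - b)) b.
Proof.
move=> [Ab b_min] /andP[l0 l1]; split => // q Aq.
have -> : b + l *: (z - b) - b = l *: (z - b) by rewrite addrAC subrr add0r.
have := ler_norm2_distD z (b + l *: (z - b)) q.
have -> : z - (b + l *: (z - b)) = (1 - l) *: (z - b).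
  by rewrite scalerBl scale1r opprD addrA.
rewrite !norm2Z (ger0_norm l0) (ger0_norm (_ : 0 <= 1 - l)); last lra.
by have := b_min q Aq; nra.
Qed.

Definition penalty y (c : R) z : R := norm2 (z - y) ^+ 2 - c * rdist A z ^+ 2.

Lemma penalty_continuous y c a0 : A a0 -> continuous (penalty y c).
Proof.
move=> Aa0 w; have y_cont := norm2_dist_continuous y w.
have A_cont := rdist_continuous a0 Aa0 w.
have : {for w, continuous (fun z => c * rdist A z ^+ 2)}.
  exact: continuousM (cvg_cst c) (continuousM A_cont A_cont).
exact/continuousB/continuousM.
Qed.

Lemma penalty_lt_sphere y p z (c r : R) : nearest A y p -> 0 < c -> 0 < r ->
  c * (2 * norm2 (y - p) + r) < r -> norm2 (z - y) = r -> penalty y c y < penalty y c z.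
Proof.
move=> yp c0 r0 c_small zy_r; set t := norm2 (y - p) in c_small *.
rewrite /penalty subrr norm2_0 (rdist_nearest y p yp) zy_r expr0n /= sub0r.
have rz : rdist A z <= t + r.
  by have := rdist_lipschitz z y p yp.1; rewrite (rdist_nearest y p yp) zy_r.
have rz2 : rdist A z ^+ 2 <= (t + r) ^+ 2.
  by apply: lerXn2r; rewrite ?nnegrE ?addr_ge0 ?norm2_ge0 ?(ltW r0) ?rdist_ge0.
have : r * (c * (2 * t + r)) < r * r by rewrite ltr_pM2l.
by rewrite -/t; have := ler_wpM2l (ltW c0) rz2; lra.
Qed.

End Distance.

Section NearestPoint.
Context {R : realType} {D : nat}.
Local Notation V := 'rV[R]_D.
Implicit Types (a b w z : V).
Variable A : set V.
Hypothesis A_closed : closed A.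

Lemma unique_nearest_gap {z b} {delta : R} : unique_nearest A z -> nearest A z b -> 0 < delta ->
  exists2 m, norm2 (z - b) < m &
    forall a, A a -> delta <= norm2 (a - b) -> m <= norm2 (z - a).
Proof.
move=> z_uniq zb delta_gt0; set r0 := norm2 (z - b).
pose K := A `&` [set a | norm2 (a - z) <= r0 + 1] `&` [set a | delta <= norm2 (a - b)].
have outside_K a : A a -> delta <= norm2 (a - b) -> ~ K a -> r0 + 1 <= norm2 (z - a).
  by move=> Aa ab aK; rewrite leNgt norm2_distC; apply/negP => /ltW ?; apply: aK.
have [K0|K0] := pselect (K !=set0); last first.
  exists (r0 + 1) => [|a Aa ab]; first lra.
  by apply: outside_K => // Ka; apply: K0; exists a.
have K_compact : compact K.
  apply: (compact_norm2_bounded _ z (r0 + 1)) => [|a [[]] //].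
  by apply: closedI; [apply: closedI|]; [|exact: closed_norm2_le|exact: closed_norm2_ge].
have [c] := compact_EVT_min K0 K_compact (continuous_subspaceT (norm2_dist_continuous z)).
rewrite inE => -[[Ac cz] cb] c_min.
have r0_lt : r0 < norm2 (z - c).
  rewrite lt_def zb.2 // andbT; apply/eqP => zc.
  have zc_nearest : nearest A z c by split => // q Aq; rewrite zc; exact: zb.2.
  by move: cb; rewrite /= (nearest_unique A z_uniq zb zc_nearest) subrr norm2_0 leNgt delta_gt0.
exists (Order.min (norm2 (z - c)) (r0 + 1)) => [|a Aa ab]; first by rewrite lt_min r0_lt; lra.
have [Ka|Ka] := pselect (K a); last by rewrite ge_min (outside_K a) ?orbT.
by rewrite ge_min !(norm2_distC z) c_min ?inE.
Qed.

Lemma nearest_continuous {z b} {delta : R} : unique_nearest A z -> nearest A z b -> 0 < delta ->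
  exists2 eta, 0 < eta &
    forall w b', norm2 (w - z) < eta -> nearest A w b' -> norm2 (b' - b) < delta.
Proof.
move=> z_uniq zb delta_gt0; have [m zb_lt m_le] := unique_nearest_gap z_uniq zb delta_gt0.
exists ((m - norm2 (z - b)) / 2) => [|w b' wz [Ab' b'_min]]; first lra.
rewrite ltNge; apply/negP => /(m_le _ Ab').
have := ler_norm2_distD z w b'; have := b'_min b zb.1; have := ler_norm2_distD w z b.
by rewrite (norm2_distC z w); lra.
Qed.

End NearestPoint.

Section Reach.
Context {R : realType} {D : nat}.
Local Notation V := 'rV[R]_D.
Implicit Types (a b p q w x y z : V).
Variables (A : set V) (zeta : R).
Hypotheses (A_closed : closed A) (A_reach : (zeta%:E <= reach A)%E).

Lemma unique_nearest_near {w a} : A a -> norm2 (w - a) < zeta -> unique_nearest A w.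
Proof.
move=> Aa wa; apply: (reach_unique_nearest A zeta w A_reach).
by apply: le_lt_trans (dist_le_norm2 _ _ _ Aa) _; rewrite lte_fin.
Qed.

Lemma nearest_first_order y z b (c : R) : 0 < c -> c <= 1/2 ->
  nearest A z b -> norm2 (z - b) < zeta ->
  (exists2 eta, 0 < eta &
     forall z', norm2 (z' - z) < eta -> penalty A y c z <= penalty A y c z') ->
  c *: (z - b) = z - y.
Proof.
move=> c0 c_le zb zb_lt [eta eta0 z_min].
apply/eqP; rewrite -subr_eq0; set v := _ - _; apply/negPn/negP => v0.
(* Otherwise a small step from z along v lowers the penalty, because the nearest
   point moves continuously with z. *)
have v_gt0 := norm2_gt0 _ v0.
have [eta' eta'0 b_cont] :=
  nearest_continuous A A_closed (unique_nearest_near zb.1 zb_lt) zb (divr_gt0 v_gt0 (ltr0n _ 4)).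
pose s := Order.min eta (Order.min eta' (zeta - norm2 (z - b))).
have s0 : 0 < s by rewrite !lt_min eta0 eta'0 subr_gt0 zb_lt.
pose tau := Order.min (1/2) (s / (2 * norm2 v)).
have tau0 : 0 < tau.
  by rewrite lt_min; apply/andP; split; [lra | rewrite divr_gt0 ?mulr_gt0].
have tau_le : tau <= 1/2 by rewrite /tau ge_min lexx.
have tau_s : tau <= s / (2 * norm2 v) by rewrite /tau ge_min lexx orbT.
have : norm2 (tau *: v) < s.
  rewrite norm2Z gtr0_norm //; apply: le_lt_trans (ler_wpM2r (ltW v_gt0) tau_s) _.
  by rewrite mulrAC -mulf_div divff ?gt_eqF // mulr1 ltr_pdivrMr //; lra.
rewrite !lt_min => /andP[z'z_eta /andP[z'z_eta' z'z_zeta]].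
set z' := z + tau *: v; have z'z : z' - z = tau *: v by rewrite /z' addrAC subrr add0r.
have [b' [z'b' _]] : unique_nearest A z'.
  apply: (unique_nearest_near zb.1).
  by apply: le_lt_trans (ler_norm2_distD _ z _) _; rewrite z'z; lra.
have b'b : norm2 (b' - b) < norm2 v / 4 by apply: b_cont z'b'; rewrite z'z.
have := z_min z'; rewrite z'z => /(_ z'z_eta); apply/negP; rewrite -ltNge.
rewrite /penalty (rdist_nearest _ _ _ zb) (rdist_nearest _ _ _ z'b').
apply: lt_le_trans (penalty_descent _ _ _ _ _ _ _ erefl v0 c0 c_le tau0 tau_le b'b) _.
rewrite lerD2l lerN2; apply: ler_wpM2l; first exact: ltW.
by apply: lerXn2r; rewrite ?nnegrE ?norm2_ge0 //; exact: zb.2 _ z'b'.1.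
Qed.

(* A minimiser z of the penalty on a small ball around y is interior, so the
   first-order condition puts y on the segment from z to its nearest point b,
   and uniqueness at y forces b = p. *)
Lemma nearest_step y p (c : R) : nearest A y p -> norm2 (y - p) < zeta ->
  0 < c -> 8 * c * zeta <= zeta - norm2 (y - p) ->
  nearest A (p + (1 - c)^-1 *: (y - p)) p.
Proof.
move=> yp yp_lt c0 c_small; set t := norm2 (y - p) in yp_lt c_small *.
set r := (zeta - t) / 2; have r0 : 0 < r by rewrite /r; lra.
have t0 : 0 <= t := norm2_ge0 _.
have c_le : c <= 1/2 by nra.
pose B := [set z | norm2 (z - y) <= r].
have [z] : exists2 z, z \in B & forall z', z' \in B -> penalty A y c z <= penalty A y c z'.
  apply: compact_EVT_min (continuous_subspaceT (penalty_continuous A y c p yp.1)).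
    by exists y; rewrite /B /= subrr norm2_0 ltW.
  exact: (compact_norm2_bounded _ y r (closed_norm2_le y r) (subset_refl _)).
rewrite inE => zy_le z_min.
have zy_lt : norm2 (z - y) < r.
  rewrite lt_def zy_le andbT; apply/eqP => zy_r.
  have : c * (2 * t + r) < r by rewrite /r; nra.
  move=> /(penalty_lt_sphere A y p z c r yp c0 r0) /(_ (esym zy_r)).
  by rewrite ltNge z_min // inE /B /= subrr norm2_0 ltW.
have zp_lt : norm2 (z - p) < zeta.
  by have := ler_norm2_distD z y p; rewrite -/t; move: zy_lt; rewrite /r; lra.
have [b [zb _]] := unique_nearest_near yp.1 zp_lt.
have zb_lt : norm2 (z - b) < zeta := le_lt_trans (zb.2 p yp.1) zp_lt.
have first_order : c *: (z - b) = z - y.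
  apply: (nearest_first_order _ _ _ _ c0 c_le zb zb_lt); exists (r - norm2 (z - y)) => [|z' z'z].
    by rewrite subr_gt0.
  apply: z_min; rewrite inE /B /=; have := ler_norm2_distD z' z y; lra.
have yb : nearest A y b.
  have -> : y = b + (1 - c) *: (z - b).
    by apply/rowP => i; move/rowP/(_ i): first_order; rewrite !mxE; lra.
  by apply: (nearest_segment _ _ _ _ zb); apply/andP; split; lra.
have b_p : b = p := nearest_unique A (unique_nearest_near yp.1 yp_lt) yp yb.
have c1 : 1 - c != 0 by apply/eqP; lra.
suff -> : p + (1 - c)^-1 *: (y - p) = z by rewrite -b_p.
apply/rowP => i; move/rowP/(_ i): first_order; rewrite b_p !mxE => ci.
by apply: (mulIf c1); rewrite mulrDl mulrAC mulVf // mul1r; lra.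
Qed.

Lemma nearest_normal_ray x p (s : R) : nearest A x p -> 0 < norm2 (x - p) -> 0 <= s < zeta ->
  nearest A (p + (s / norm2 (x - p)) *: (x - p)) p.
Proof.
move=> xp d_gt0 /andP[s0 s_lt]; set d := norm2 (x - p) in d_gt0 *.
pose w t := p + (t / d) *: (x - p).
(* Iterate nearest_step with a fixed c: each step multiplies the distance to p by
   1 / (1 - c) >= 1 + c, so finitely many steps reach s. *)
have wp t : 0 <= t -> norm2 (w t - p) = t.
  move=> t0; rewrite /w addrAC subrr add0r norm2Z -/d ger0_norm ?divr_ge0 ?(ltW d_gt0) //.
  by rewrite -mulrA mulVf ?mulr1 ?gt_eqF.
pose c := (zeta - s) / (8 * zeta).
have c_zeta : 8 * c * zeta = zeta - s by rewrite /c; field; rewrite gt_eqF //; lra.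
have c0 : 0 < c by rewrite /c divr_gt0 //; lra.
clearbody c.
have c_le : c <= 1/8.
  by rewrite -(ler_pM2r (_ : 0 < 8 * zeta)) ?mulr_gt0 //; lra.
have cd0 : 0 < c * d by rewrite mulr_gt0.
have near_k (k : nat) t : 0 <= t <= s -> t <= d + k%:R * (c * d) -> nearest A (w t) p.
  elim: k t => [|k IHk] t /andP[t0 ts] t_le.
    by apply: nearest_segment xp _; rewrite divr_ge0 ?ler_pdivrMr ?mul1r ?(ltW d_gt0) //; lra.
  have [t_le'|t_gt] := leP t (d + k%:R * (c * d)); first by apply: IHk; rewrite ?t0.
  have c1 : 1 - c != 0 by apply/eqP; lra.
  set t' := (1 - c) * t.
  have kcd0 : 0 <= k%:R * (c * d) by apply: mulr_ge0; rewrite ?ler0n ?ltW.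
  have cdt : c * d <= c * t by rewrite ler_pM2l //; lra.
  have ct0 := mulr_ge0 (ltW c0) t0.
  have t'0 : 0 <= t' by rewrite /t' mulr_ge0 // subr_ge0; lra.
  have t's : t' <= s by rewrite /t'; lra.
  have w_t : w t = p + (1 - c)^-1 *: (w t' - p).
    by rewrite /w addrAC subrr add0r scalerA mulrA mulKf.
  rewrite w_t; apply: (nearest_step _ _ _ _ _ c0); rewrite ?wp //; try lra.
  apply: IHk; first by rewrite t'0.
  by move: t_le; rewrite -natr1 /t'; nra.
have [k s_le] : exists k : nat, s <= d + k%:R * (c * d).
  exists (Num.bound (s / (c * d))).
  have := archi_boundP (divr_ge0 s0 (ltW cd0)); rewrite ltr_pdivrMr //; lra.
by apply: near_k s_le; rewrite s0 lexx.
Qed.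

Lemma reach_dot_le x p q (s : R) : nearest A x p -> A q -> 0 <= s < zeta ->
  2 * s * dot (x - p) (q - p) <= norm2 (x - p) * norm2 (q - p) ^+ 2.
Proof.
move=> xp Aq s_range; have [->|xp_neq] := eqVneq x p.
  by rewrite subrr dot0l norm2_0 !mulr0 mul0r.
have d_gt0 : 0 < norm2 (x - p) by rewrite norm2_gt0 // subr_eq0.
set l := s / norm2 (x - p); set u := l *: (x - p).
have := (nearest_normal_ray _ _ _ xp d_gt0 s_range).2 q Aq.
rewrite -/l -/u addrAC subrr add0r (_ : p + u - q = u - (q - p)); last first.
  apply/rowP => i; rewrite !mxE; ring.
move=> /(lerXn2r 2); rewrite !nnegrE !norm2_ge0 => /(_ isT isT) le_l.
rewrite norm2B_sqr /u dotZl -addrA lerDl in le_l.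
have -> : s = l * norm2 (x - p) by rewrite /l divfK // gt_eqF.
by have := ler_wpM2l (ltW d_gt0) le_l; lra.
Qed.

Lemma reach_dot_le_add x p q (e : R) : nearest A x p -> A q -> 0 < e -> 0 < zeta ->
  2 * zeta * dot (x - p) (q - p) <= (norm2 (x - p) + e) * norm2 (q - p) ^+ 2.
Proof.
move=> xp Aq e_gt0 zeta_gt0; have [->|xp_neq] := eqVneq x p.
  by rewrite subrr dot0l norm2_0 add0r mulr0 mulr_ge0 ?sqr_ge0 ?ltW.
set d := norm2 (x - p); have d_gt0 : 0 < d by rewrite norm2_gt0 // subr_eq0.
have s_range : 0 <= zeta * d / (d + e) < zeta.
  by rewrite divr_ge0 ?mulr_ge0 /= ?ltr_pdivrMr; nra.
have k_ge0 : 0 <= (d + e) / d by rewrite divr_ge0 //; lra.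
have := ler_wpM2r k_ge0 (reach_dot_le _ _ _ _ xp Aq s_range); rewrite -/d.
have -> : 2 * (zeta * d / (d + e)) * dot (x - p) (q - p) * ((d + e) / d) =
    2 * zeta * dot (x - p) (q - p) by field; lra.
by have -> : d * norm2 (q - p) ^+ 2 * ((d + e) / d) = (d + e) * norm2 (q - p) ^+ 2 by field; lra.
Qed.

Lemma nearest_stability x p q (eps : R) : nearest A x p -> A q -> 0 < eps ->
  norm2 (x - p) + eps < zeta -> norm2 (x - q) <= norm2 (x - p) + 2 * eps ->
  norm2 (q - p) <= 2 * Num.sqrt
    ((norm2 (x - p) * eps + eps ^+ 2) / (1 - (norm2 (x - p) + eps) / zeta)).
Proof.
move=> xp Aq eps_gt0 d_lt xq_le; have d0 := norm2_ge0 (x - p).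
have zeta_gt0 : 0 < zeta by lra.
have zeta_delta := reach_dot_le_add _ _ _ _ xp Aq eps_gt0 zeta_gt0.
set d := norm2 (x - p) in d_lt xq_le d0 zeta_delta *.
set Q := norm2 (q - p) ^+ 2 in zeta_delta *; set delta := dot (x - p) (q - p) in zeta_delta.
have xq_sqr : norm2 (x - q) ^+ 2 = d ^+ 2 - 2 * delta + Q.
  by rewrite -norm2B_sqr; congr (norm2 _ ^+ 2); rewrite opprB addrA subrK.
have : norm2 (x - q) ^+ 2 <= (d + 2 * eps) ^+ 2.
  by apply: lerXn2r; rewrite // nnegrE ?norm2_ge0 // addr_ge0 // mulr_ge0 // ltW.
rewrite xq_sqr => xq_sqr_le.
set X := d * eps + eps ^+ 2; set den := 1 - (d + eps) / zeta.
have den_gt0 : 0 < den by rewrite subr_gt0 ltr_pdivrMr // mul1r.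
have X0 : 0 <= X by rewrite /X; nra.
have X_den0 := divr_ge0 X0 (ltW den_gt0).
have Q_le : Q <= 4 * (X / den).
  rewrite mulrA ler_pdivlMr // -(ler_pM2r zeta_gt0).
  have -> : Q * den * zeta = zeta * Q - (d + eps) * Q by rewrite /den; field; lra.
  have Q_delta : Q - 2 * delta <= 4 * X by rewrite /X; lra.
  by have := ler_wpM2l (ltW zeta_gt0) Q_delta; lra.
apply: norm2_le_sqr; first by rewrite mulr_ge0 ?sqrtr_ge0.
by rewrite -/Q exprMn (sqr_sqrtr X_den0); lra.
Qed.

End Reach.

Lemma le_stability_bound {R : realType} (zeta eps d r : R) :
  0 < eps -> 0 <= d <= r -> r + eps < zeta ->
  eps + 2 * Num.sqrt ((d * eps + eps ^+ 2) / (1 - (d + eps) / zeta)) <=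
  eps + 2 * Num.sqrt ((r * eps + eps ^+ 2) / (1 - (r + eps) / zeta)).
Proof.
move=> eps_gt0 /andP[d0 dr] r_lt; have zeta_gt0 : 0 < zeta by lra.
have den_le : 1 - (r + eps) / zeta <= 1 - (d + eps) / zeta.
  have : (d + eps) / zeta <= (r + eps) / zeta by rewrite ler_pM2r ?invr_gt0 //; lra.
  lra.
have den_gt0 : 0 < 1 - (r + eps) / zeta by rewrite subr_gt0 ltr_pdivrMr // mul1r.
have num_gt0 : 0 < r * eps + eps ^+ 2.
  by have := mulr_ge0 (le_trans d0 dr) (ltW eps_gt0); have := exprn_gt0 2 eps_gt0; lra.
rewrite lerD2l ler_pM2l // ler_sqrt; last by rewrite divr_ge0 ?ltW.
apply: le_trans (_ : (r * eps + eps ^+ 2) / (1 - (d + eps) / zeta) <= _).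
  by rewrite ler_pM2r ?invr_gt0 ?(lt_le_trans den_gt0) // lerD2r ler_pM2r.
by rewrite ler_pM2l // lef_pV2 ?posrE ?(lt_le_trans den_gt0).
Qed.

Section Hausdorff.
Context {R : realType} {D : nat}.
Implicit Types (A B : set 'rV[R]_D) (a p pb x : 'rV[R]_D).

Lemma dist_le_hausdorff A B a : A a -> (dist a B <= hausdorff_dist A B)%E.
Proof. by move=> Aa; rewrite le_max ereal_sup_ubound //; exists a. Qed.

Lemma hausdorff_distC A B : hausdorff_dist A B = hausdorff_dist B A.
Proof. exact: maxC. Qed.

Lemma hausdorff_nearest A B (zeta eps : R) a :
  (zeta%:E <= reach B)%E -> (hausdorff_dist A B <= eps%:E)%E -> eps < zeta -> A a ->
  exists b, nearest B a b /\ norm2 (a - b) <= eps.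
Proof.
move=> B_reach AB_le eps_lt Aa.
have aB_le : (dist a B <= eps%:E)%E := le_trans (dist_le_hausdorff A B a Aa) AB_le.
have [b [ab _]] : unique_nearest B a.
  by apply: (reach_unique_nearest B zeta a B_reach); apply: le_lt_trans aB_le _; rewrite lte_fin.
by exists b; split; rewrite // -lee_fin -(dist_nearest B a b ab).
Qed.

Lemma nearest_le_hausdorff A B (zeta eps : R) x p pb :
  (zeta%:E <= reach B)%E -> (hausdorff_dist A B <= eps%:E)%E -> eps < zeta ->
  nearest A x p -> nearest B x pb -> norm2 (x - pb) <= norm2 (x - p) + eps.
Proof.
move=> B_reach AB_le eps_lt xp xpb.
have [b [pb' pb'_le]] := hausdorff_nearest A B zeta eps p B_reach AB_le eps_lt xp.1.
by apply: le_trans (xpb.2 b pb'.1) _; have := ler_norm2_distD x p b; lra.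
Qed.

End Hausdorff.

Theorem lemmaE3 (R : realType) (D : nat) (M Mh : set 'rV[R]_D)
    (zeta eps r : R) :
  closed M -> closed Mh ->
  embedded_submanifold M -> embedded_submanifold Mh ->
  0 < zeta ->
  (zeta%:E <= reach M)%E -> (zeta%:E <= reach Mh)%E ->
  0 < eps -> eps < zeta / 4 ->
  (hausdorff_dist M Mh <= eps%:E)%E ->
  0 < r -> r < zeta - 2 * eps ->
  forall x, tube M r x ->
    [/\ unique_nearest M x, unique_nearest Mh x &
        forall p ph, nearest M x p -> nearest Mh x ph ->
          norm2 (p - ph) <= eps + 2 * Num.sqrt
            ((fine (dist x M) * eps + eps ^+ 2)
               / (1 - (fine (dist x M) + eps) / zeta))
          /\ norm2 (p - ph) <= eps + 2 * Num.sqrt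
            ((r * eps + eps ^+ 2) / (1 - (r + eps) / zeta))].
Proof.
move=> M_closed _ _ _ zeta_gt0 M_reach Mh_reach eps_gt0 eps_lt MMh_le r_gt0 r_lt x x_tube.
have eps_zeta : eps < zeta by lra.
have x_uniq : unique_nearest M x.
  apply: (reach_unique_nearest M zeta x M_reach); apply: lt_trans x_tube _; rewrite lte_fin; lra.
have xp_lt p : nearest M x p -> norm2 (x - p) < r.
  by move=> xp; rewrite -lte_fin -(dist_nearest M x p xp).
have [p0 [xp0 _]] := x_uniq.
have [b0 [p0b0 p0b0_le]] := hausdorff_nearest M Mh zeta eps p0 Mh_reach MMh_le eps_zeta xp0.1.
have xh_uniq : unique_nearest Mh x.
  apply: (unique_nearest_near Mh zeta Mh_reach p0b0.1).
  by have := ler_norm2_distD x p0 b0; have := xp_lt p0 xp0; lra.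
split => // p ph xp xph; rewrite (dist_nearest M x p xp) /=.
have d_lt := xp_lt p xp.
have xph_le := nearest_le_hausdorff M Mh zeta eps x p ph Mh_reach MMh_le eps_zeta xp xph.
have [q [phq phq_le]] : exists q, nearest M ph q /\ norm2 (ph - q) <= eps.
  apply: (hausdorff_nearest Mh M zeta eps ph M_reach _ eps_zeta xph.1).
  by rewrite hausdorff_distC.
have xq_le : norm2 (x - q) <= norm2 (x - p) + 2 * eps.
  by have := ler_norm2_distD x ph q; lra.
have d_eps : norm2 (x - p) + eps < zeta by lra.
have := nearest_stability M zeta M_closed M_reach x p q eps xp phq.1 eps_gt0 d_eps xq_le.
have := ler_norm2_distD p q ph; rewrite (norm2_distC p q) (norm2_distC q ph) => pph_le qp_le.
split; first lra.
have d_range : 0 <= norm2 (x - p) <= r by rewrite norm2_ge0 ltW.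
have r_eps : r + eps < zeta by lra.
by have := le_stability_bound zeta eps _ r eps_gt0 d_range r_eps; lra.
Qed.
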